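(* Let $(X,\cdot)$ be a Rump right quasigroup and let $R: X\times X \to X \times X$, $R(x,y) = (y(x/y),\, x/y)$, with $\nu(x,y) = y(x/y)$ and $\mu(x,y) = x/y$ its two components. Let $(C^{YB}_n(X), \partial^{YB}_n)$ be the set-theoretic Yang-Baxter chain complex of $R$ (defined in the context), and for $n \ge 2$ let $C^D_n(X) \subseteq C^{YB}_n(X)$ be the subgroup spanned by all tuples of the form $(x_1,\ldots,x_{i-1}, x_i x_i, x_i, x_{i+1},\ldots,x_{n-1})$ with $1 \le i \le n-1$ and $x_1,\ldots,x_{n-1}\in X$, and let $C^D_n(X) = 0$ for $n \le 1$. Then $\partial^{YB}_n\bigl(C^D_n(X)\bigr) \subseteq C^D_{n-1}(X)$ for all $n$, i.e. $(C^D_n(X), \partial^{YB}_n)$ is a sub-chain complex of $(C^{YB}_n(X),\partial^{YB}_n)$.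
   Context: A right quasigroup is a magma in which every right translation $y\mapsto yx$ is bijective; $x/y$ denotes the unique $w$ with $wy=x$. A Rump right quasigroup is a right quasigroup with $(zx)(yx)=(zy)(xy)$ for all $x,y,z$. Set-theoretic Yang-Baxter chain complex: $C^{YB}_n(X)$ is the free abelian group on $X^n$ ($n\ge 0$; $X^0$ is a single point). For $1\le i\le n$ define face maps $d^l_{i,n}, d^r_{i,n}: X^n \to X^{n-1}$ (extended linearly) as follows. $d^l_{1,n}$ deletes the first coordinate; for $i\ge 2$, $d^l_{i,n}$ applies $R$ to the coordinates in positions $(i-1,i)$, then to positions $(i-2,i-1)$, ..., then to positions $(2,3)$, and finally replaces the first two coordinates $(a,b)$ by the single coordinate $\mu(a,b)$; i.e. $d^l_{i,n} = (\mu \times \mathrm{Id}^{\times(n-2)})\circ(\mathrm{Id}\times R\times \mathrm{Id}^{\times(n-3)})\circ\cdots\circ(\mathrm{Id}^{\times(i-2)}\times R\times\mathrm{Id}^{\times(n-i)})$. Symmetrically, $d^r_{n,n}$ deletes the last coordinate; for $i \le n-1$, $d^r_{i,n} = (\mathrm{Id}^{\times(n-2)}\times\nu)\circ(\mathrm{Id}^{\times(n-3)}\times R\times\mathrm{Id})\circ\cdots\circ(\mathrm{Id}^{\times(i-1)}\times R\times \mathrm{Id}^{\times(n-i-1)})$, i.e. apply $R$ at positions $(i,i+1)$, then $(i+1,i+2)$, ..., $(n-2,n-1)$, then replace the last two coordinates $(a,b)$ by $\nu(a,b)$. The boundary is $\partial^{YB}_n = \sum_{i=1}^n (-1)^{i+1}(d^l_{i,n}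 - d^r_{i,n})$; it satisfies $\partial^{YB}_{n-1}\circ\partial^{YB}_n = 0$. For example $\partial^{YB}_3(x,y,z) = (y,z) - (y(x/y), z((x/y)/z)) - (x/y,z) + (x, z(y/z)) + (x/(z(y/z)), y/z) - (x,y)$. *)

From HB Require Import structures.
From mathcomp Require Import all_boot all_order all_algebra.
From mathcomp Require Import freeg.
Set Implicit Arguments. Unset Strict Implicit. Unset Printing Implicit Defensive.
Import GRing.Theory.
Local Open Scope ring_scope.

Section YB.
Variable X : choiceType.
Variables (mul div : X -> X -> X).

Definition nuYB (x y : X) : X := mul y (div x y).
Definition muYB (x y : X) : X := div x y.

(* apply R to the coordinates at 0-indexed positions (k, k+1) *)
Definition applyR (k : nat) (t : seq X) : seq X :=
  match drop k t with
  | a :: b :: r => take k t ++ nuYB a b :: muYB a b :: r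
  | _ => t
  end.

(* d^l_{i,n}, with n = size t, 1 <= i <= n (1-indexed i) *)
Definition dl (i : nat) (t : seq X) : seq X :=
  if i == 1%N then behead t
  else
    (* R at 1-indexed positions (i-1,i), (i-2,i-1), ..., (2,3),
       i.e. 0-indexed k = i-2, i-3, ..., 1 *)
    let s := foldl (fun s k => applyR k s) t (rev (iota 1 (i - 2))) in
    match s with
    | a :: b :: r => muYB a b :: r
    | _ => s
    end.

(* d^r_{i,n}, with n = size t, 1 <= i <= n *)
Definition dr (i : nat) (t : seq X) : seq X :=
  let n := size t in
  if i == n then take (n - 1) t
  else
    (* R at 1-indexed positions (i,i+1), ..., (n-2,n-1),
       i.e. 0-indexed k = i-1, ..., n-3 *)
    let s := foldl (fun s k => applyR k s) t (iota (i - 1) (n - 1 - i)) in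
    let m := size s in
    match drop (m - 2) s with
    | [:: a; b] => take (m - 2) s ++ [:: nuYB a b]
    | _ => s
    end.

(* chains: the free abelian group on X^* = disjoint union of the X^n;
   C^{YB}_n(X) is the subgroup of chains supported on tuples of size n. *)
Definition chain := {freeg (seq X) / int}.

Definition bdYB_gen (t : seq X) : chain :=
  \sum_(1 <= i < (size t).+1)
     ((-1) ^+ i.+1 : int) *: (<< dl i t >> - << dr i t >>).

(* linear extension: on C_n this is \partial^{YB}_n *)
Definition bdYB (c : chain) : chain := fglift bdYB_gen c.

(* degenerate generator (x_1,...,x_{i-1}, x_i x_i, x_i, x_{i+1},...,x_{n-1})
   encoded as (pre, x_i, post) with pre = (x_1..x_{i-1}) *)
Definition degen_gen (g : seq X * X * seq X) : seq X :=
  g.1.1 ++ mul g.1.2 g.1.2 :: g.1.2 :: g.2.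

(* c lies in C^D_n(X): c is a Z-linear combination of degenerate generators
   of length n, i.e. with 1 <= i <= n-1 (size pre + size post + 2 = n).
   For n <= 1 there are no such generators, so C^D_n = 0. *)
Definition inCD (n : nat) (c : chain) : Prop :=
  exists s : seq (int * (seq X * X * seq X)),
    all (fun e => (size e.2.1.1 + size e.2.2).+2 == n) s /\
    c = \sum_(e <- s) e.1 *: << degen_gen e.2 >>.

End YB.

Definition rump_right_quasigroup (X : Type) (mul div : X -> X -> X) : Prop :=
  (forall x : X, bijective (fun y => mul y x)) /\
  (forall x y : X, mul (div x y) y = x) /\
  (forall x y z : X, mul (mul z x) (mul y x) = mul (mul z y) (mul x y)).

From HB Require Import structures.
From mathcomp Require Import all_boot all_order all_algebra.
From mathcomp Require Import freeg zify.
Set Implicit Arguments. Unset Strict Implicit. Unset Printing Implicit Defensive.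
Import GRing.Theory.

(* Write a degenerate tuple as [p ++ x x :: x :: q].  Since R fixes the pair
   (x x, x), the faces d_i and d_(i+1) at the positions of that pair coincide
   and cancel in the alternating sum.  Every other face slides one entry through
   the pair by successive applications of R, and two consequences of the Rump
   identity, (x x)/(y (x/y)) = (x/y)(x/y) and (x x)(u/(x x)) = v v for
   v = x ((u/(x x))/x), show that the pair stays degenerate after the slide. *)

Lemma seq_split_at (T : Type) (s : seq T) j : j < size s ->
  exists m y r, s = m ++ y :: r /\ size m = j.
Proof.
move=> lt_j; case E: (drop j s) => [|y r].
  by move: E => /(congr1 size); rewrite size_drop /=; lia.
exists (take j s), y, r; split; first by rewrite -E cat_take_drop.
by rewrite size_take lt_j.
Qed.

Section Faces.
Variables (X : choiceType) (mul div : X -> X -> X).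
Local Notation nu := (nuYB mul div).
Local Notation mu := (muYB div).
Local Notation sq x := (mul x x).

(* [slideL ms y] moves [y] leftwards through [ms] by R: it returns the entry
   that arrives in front of [ms] and the entries left behind; [d^l] then drops
   the front entry (see [dl_cat]).  [slideR] is the mirror image. *)
Fixpoint slideL (ms : seq X) (y : X) : X * seq X :=
  if ms is m :: ms' then
    let s := slideL ms' y in (nu m s.1, mu m s.1 :: s.2)
  else (y, [::]).

Fixpoint slideR (w : X) (ms : seq X) : seq X * X :=
  if ms is m :: ms' then
    let s := slideR (mu w m) ms' in (nu w m :: s.1, s.2)
  else ([::], w).

Lemma size_slideL ms y : size (slideL ms y).2 = size ms.
Proof. by elim: ms => //= m ms ->. Qed.

Lemma size_slideR w ms : size (slideR w ms).1 = size ms.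
Proof. by elim: ms w => //= m ms IH w; rewrite IH. Qed.

Lemma slideL_cat a b y :
  slideL (a ++ b) y =
  let s := slideL b y in ((slideL a s.1).1, (slideL a s.1).2 ++ s.2).
Proof. by elim: a => [|m a /= ->] //=; case: (slideL b y). Qed.

Lemma slideR_cat w a b :
  slideR w (a ++ b) =
  let s := slideR w a in ((s.1 ++ (slideR s.2 b).1), (slideR s.2 b).2).
Proof. by elim: a w => [|m a IH] w /=; [case: (slideR w b) | rewrite IH]. Qed.

Lemma applyR_size_cat pre a b r :
  applyR mul div (size pre) (pre ++ a :: b :: r) = pre ++ nu a b :: mu a b :: r.
Proof. by rewrite /applyR drop_size_cat // take_size_cat. Qed.

Lemma foldl_applyR_slideL pre ms y r :
  foldl (fun s k => applyR mul div k s) (pre ++ ms ++ y :: r)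
        (rev (iota (size pre) (size ms))) =
  pre ++ (slideL ms y).1 :: (slideL ms y).2 ++ r.
Proof.
elim: ms pre => [|m ms IH] pre //=.
rewrite rev_cons foldl_rcons -cat_rcons.
by have := IH (rcons pre m); rewrite size_rcons => ->; rewrite cat_rcons applyR_size_cat.
Qed.

Lemma foldl_applyR_slideR pre w ms r :
  foldl (fun s k => applyR mul div k s) (pre ++ w :: ms ++ r)
        (iota (size pre) (size ms)) =
  pre ++ (slideR w ms).1 ++ (slideR w ms).2 :: r.
Proof.
elim: ms pre w => [|m ms IH] pre w //=.
rewrite applyR_size_cat -cat_rcons.
by have := IH (rcons pre (nu w m)); rewrite size_rcons => ->; rewrite cat_rcons.
Qed.

Lemma dl_cat ms y r : dl mul div (size ms).+1 (ms ++ y :: r) = (slideL ms y).2 ++ r.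
Proof.
case: ms => [|m ms] //; rewrite /dl /= subn2 /=.
by have := foldl_applyR_slideL [:: m] ms y r => /= ->.
Qed.

Lemma dr_cat pre w ms : dr mul div (size pre).+1 (pre ++ w :: ms) = pre ++ (slideR w ms).1.
Proof.
rewrite /dr size_cat /=; case/lastP: ms => [|ms z].
  by rewrite addn1 eqxx /= subn1 take_size_cat // cats0.
rewrite size_rcons addnS eqSS -{1}(addn0 (size pre)) eqn_add2l /=.
have -> : (size pre + (size ms).+1).+1 - 1 - (size pre).+1 = size ms by lia.
rewrite subn1 /= -cats1 foldl_applyR_slideR catA.
rewrite size_cat /= addn2 subn2 /= drop_size_cat ?take_size_cat ?size_cat ?size_slideR //.
by rewrite slideR_cat /= -catA.
Qed.

Lemma size_dl i t : 0 < i <= size t -> size (dl mul div i t) = (size t).-1.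
Proof.
case: i => [|i] //= lt_i; have [ms [y [r [-> <-]]]] := seq_split_at lt_i.
by rewrite dl_cat !size_cat size_slideL /= addnS.
Qed.

Lemma size_dr i t : 0 < i <= size t -> size (dr mul div i t) = (size t).-1.
Proof.
case: i => [|i] //= lt_i; have [pre [w [ms [-> <-]]]] := seq_split_at lt_i.
by rewrite dr_cat !size_cat size_slideR /= addnS.
Qed.

Definition degenerate (u : seq X) : Prop := exists g, u = degen_gen mul g.

Lemma size_degen_gen g : size (degen_gen mul g) = (size g.1.1 + size g.2).+2.
Proof. by rewrite size_cat /= !addnS. Qed.

Lemma dl_degen_left ms y r x q :
  degenerate (dl mul div (size ms).+1 (ms ++ y :: r ++ sq x :: x :: q)).
Proof. by rewrite dl_cat; exists ((slideL ms y).2 ++ r, x, q); rewrite /degen_gen catA. Qed.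

Lemma dr_degen_right pre x ms w r :
  degenerate (dr mul div (size (pre ++ sq x :: x :: ms)).+1
                ((pre ++ sq x :: x :: ms) ++ w :: r)).
Proof.
by rewrite dr_cat; exists (pre, x, ms ++ (slideR w r).1); rewrite /degen_gen /= -catA.
Qed.

Hypothesis rump : rump_right_quasigroup mul div.

Lemma rtrans_inj x : injective (mul^~ x).
Proof. by case: rump => bij _; exact: bij_inj. Qed.

Lemma divqK x y : mul (div x y) y = x.
Proof. by case: rump => _ []. Qed.

Lemma mul_rump x y z : mul (mul z x) (mul y x) = mul (mul z y) (mul x y).
Proof. by case: rump => _ []. Qed.

Lemma muYB_sq x : mu (sq x) x = x.
Proof. by apply: (@rtrans_inj x); rewrite divqK. Qed.

Lemma nuYB_sq x : nu (sq x) x = sq x.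
Proof. by rewrite /nuYB -/(muYB div _ _) muYB_sq. Qed.

Lemma muYB_sq_nuYB x y : mu (sq x) (nu x y) = sq (mu x y).
Proof.
by apply: (@rtrans_inj (nu x y)); rewrite divqK /nuYB /muYB mul_rump divqK.
Qed.

Lemma nuYB_sq_r u x : nu u (sq x) = sq (nu (mu u (sq x)) x).
Proof. by rewrite /nuYB /muYB -{1}(divqK (div u (sq x)) x) mul_rump. Qed.

Lemma dl_degen_pair pre x post (t := degen_gen mul (pre, x, post)) :
  dl mul div (size pre).+1 t = dl mul div (size pre).+2 t.
Proof.
rewrite /t /degen_gen /= dl_cat -[in RHS]cat_rcons -(size_rcons pre (sq x)) dl_cat.
by rewrite -cats1 slideL_cat /= nuYB_sq muYB_sq -catA.
Qed.

Lemma dr_degen_pair pre x post (t := degen_gen mul (pre, x, post)) :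
  dr mul div (size pre).+1 t = dr mul div (size pre).+2 t.
Proof.
rewrite /t /degen_gen /= dr_cat -[in RHS]cat_rcons -(size_rcons pre (sq x)) dr_cat.
by rewrite /= nuYB_sq muYB_sq cat_rcons.
Qed.

Lemma dr_degen_left ms w r x q :
  degenerate (dr mul div (size ms).+1 (ms ++ w :: r ++ sq x :: x :: q)).
Proof.
rewrite dr_cat slideR_cat /= nuYB_sq_r.
set u := (slideR w r).2.
exists (ms ++ (slideR w r).1, nu (mu u (sq x)) x, (slideR (mu (mu u (sq x)) x) q).1).
by rewrite /degen_gen /= -catA.
Qed.

Lemma dl_degen_right pre x ms y r :
  degenerate (dl mul div (size (pre ++ sq x :: x :: ms)).+1
                ((pre ++ sq x :: x :: ms) ++ y :: r)).
Proof.
rewrite dl_cat slideL_cat /= muYB_sq_nuYB.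
set z := (slideL ms y).1.
exists ((slideL pre (nu (sq x) (nu x z))).2, mu x z, (slideL ms y).2 ++ r).
by rewrite /degen_gen /= -catA.
Qed.

Lemma faces_degenerate pre x post j (t := degen_gen mul (pre, x, post)) :
  j < size t -> j != size pre -> j != (size pre).+1 ->
  degenerate (dl mul div j.+1 t) /\ degenerate (dr mul div j.+1 t).
Proof.
rewrite /t size_degen_gen /= => lt_j ne_j ne_j1.
case: (ltnP j (size pre)) => [lt_jpre | le_prej].
  have [ms [y [r [-> <-]]]] := seq_split_at lt_jpre.
  by rewrite /degen_gen /= -catA; split; [apply: dl_degen_left | apply: dr_degen_left].
have lt_jpost : j - (size pre).+2 < size post by lia.
have [ms [y [r [-> size_ms]]]] := seq_split_at lt_jpost.
have -> : j = size (pre ++ sq x :: x :: ms) by rewrite size_cat /=; lia.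
rewrite /degen_gen /=.
have -> : pre ++ sq x :: x :: ms ++ y :: r = (pre ++ sq x :: x :: ms) ++ y :: r.
  by rewrite -catA.
by split; [apply: dl_degen_right | apply: dr_degen_right].
Qed.

End Faces.

Local Open Scope ring_scope.

Lemma bdYB_is_zmod_morphism (X : choiceType) (mul div : X -> X -> X) :
  zmod_morphism (bdYB mul div).
Proof. exact: lift_is_additive. Qed.

HB.instance Definition _ (X : choiceType) (mul div : X -> X -> X) :=
  GRing.isZmodMorphism.Build (chain X) (chain X) (bdYB mul div)
    (bdYB_is_zmod_morphism mul div).

Section DegenerateChains.
Variables (X : choiceType) (mul div : X -> X -> X).
Implicit Types (n : nat) (c : chain X).

Lemma bdYBZ (k : int) c : bdYB mul div (k *: c) = k *: bdYB mul div c.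
Proof. by rewrite -[k in LHS]intz -[k in RHS]intz !scaler_int raddfMz. Qed.

Lemma bdYBU t : bdYB mul div << t >> = bdYB_gen mul div t.
Proof. by rewrite /bdYB liftU scale1r. Qed.

Lemma inCD0 n : inCD mul n 0.
Proof. by exists [::]; rewrite big_nil. Qed.

Lemma inCDD n c1 c2 : inCD mul n c1 -> inCD mul n c2 -> inCD mul n (c1 + c2).
Proof.
move=> [s1 [size_s1 ->]] [s2 [size_s2 ->]]; exists (s1 ++ s2).
by rewrite all_cat size_s1 size_s2 big_cat.
Qed.

Lemma inCDZ n (k : int) c : inCD mul n c -> inCD mul n (k *: c).
Proof.
move=> [s [size_s ->]]; exists [seq (k * e.1, e.2) | e <- s].
rewrite all_map big_map scaler_sumr; split=> //.
by apply: eq_bigr => e _; rewrite scalerA.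
Qed.

Lemma inCDB n c1 c2 : inCD mul n c1 -> inCD mul n c2 -> inCD mul n (c1 - c2).
Proof. by move=> in_c1 in_c2; rewrite -scaleN1r; apply/inCDD/inCDZ. Qed.

Lemma inCD_sum n (I : eqType) (r : seq I) (P : pred I) (F : I -> chain X) :
  (forall i, i \in r -> P i -> inCD mul n (F i)) ->
  inCD mul n (\sum_(i <- r | P i) F i).
Proof.
move=> in_F; rewrite big_seq_cond; apply: big_ind; [exact: inCD0 | exact: inCDD |].
by move=> i /andP[]; apply: in_F.
Qed.

Lemma inCD_degenerate u : degenerate mul u -> inCD mul (size u) << u >>.
Proof.
by move=> [g ->]; exists [:: (1, g)]; rewrite /= big_seq1 scale1r size_degen_gen eqxx.
Qed.

Lemma inCD_sum_nat_cancel n a b k (F : nat -> chain X) :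
  (a <= k)%N -> (k.+2 <= b)%N -> F k + F k.+1 = 0 ->
  (forall i, (a <= i < b)%N -> i != k -> i != k.+1 -> inCD mul n (F i)) ->
  inCD mul n (\sum_(a <= i < b) F i).
Proof.
move=> le_ak le_kb cancel_k in_F.
have le_kb' : (k <= b)%N by lia.
rewrite (big_cat_nat le_ak le_kb') (big_cat_nat (leqW (leqnSn k)) le_kb) /=.
rewrite [\sum_(k <= i < k.+2) _]big_ltn // big_nat1 cancel_k add0r.
apply: inCDD; apply: inCD_sum => i; rewrite mem_index_iota => /andP[? ?] _.
  by apply: in_F; lia.
by apply: in_F; lia.
Qed.

Hypothesis rump : rump_right_quasigroup mul div.

Lemma inCD_bdYB_gen u : degenerate mul u -> inCD mul (size u).-1 (bdYB_gen mul div u).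
Proof.
move=> [[[pre x] post] {u}->]; set t := degen_gen _ _.
apply: (@inCD_sum_nat_cancel _ _ _ (size pre).+1) => //.
  by rewrite size_degen_gen /=; lia.
  by rewrite dl_degen_pair // dr_degen_pair // [_ ^+ (size pre).+3]exprS mulN1r scaleNr addrN.
move=> [|j] //= lt_j ne_j ne_j1.
have [dl_degenerate dr_degenerate] := faces_degenerate rump lt_j ne_j ne_j1.
apply/inCDZ/inCDB.
  by rewrite -(@size_dl _ mul div j.+1 t) //; apply: inCD_degenerate.
by rewrite -(@size_dr _ mul div j.+1 t) //; apply: inCD_degenerate.
Qed.

End DegenerateChains.

Theorem mainTheorem3 (X : choiceType) (mul div : X -> X -> X) :
  rump_right_quasigroup mul div ->
  forall (n : nat) (c : chain X),
    inCD mul n c -> inCD mul n.-1 (bdYB mul div c).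
Proof.
move=> rump n c [s [size_s ->]].
rewrite raddf_sum; apply: inCD_sum => -[k g] /(allP size_s) /eqP size_g _ /=.
rewrite bdYBZ bdYBU; apply: inCDZ.
by rewrite -size_g -(size_degen_gen mul); apply: inCD_bdYB_gen => //; exists g.
Qed.
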